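(* Let $\mathcal H=\bigoplus_{n=1}^\infty\mathbb C^n$, let $\{e_{n,i}\}_{i=1}^n$ be the canonical orthonormal basis of $\mathbb C^n$, and let $V=\bigoplus_{n=1}^\infty V_n$, where $V_n\in M_n(\mathbb C)$ is the upper shift matrix, $V_ne_{n,i}=e_{n,i-1}$ (with $e_{n,0}=0$). Then for every nonzero Hilbert space $\mathcal K$ there is no idempotent $P\in\mathcal B(\mathcal K\otimes\mathcal H)$ such that $P(I\otimes V)=(I\otimes V)P$ and $I\otimes V-P$ is invertible; i.e. $I\otimes V$ is not strongly clean in $\mathcal B(\mathcal K\otimes\mathcal H)$.
   Context: An element $T$ of a unital ring is strongly clean if $T=U+P$ with $U$ invertible, $P$ idempotent and $PT=TP$. *)

From HB Require Import structures.
From mathcomp Require Import all_boot all_order all_algebra.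
From mathcomp Require Import complex.
From mathcomp Require Import boolp classical_sets reals constructive_ereal ereal esum.

Set Implicit Arguments.
Unset Strict Implicit.
Unset Printing Implicit Defensive.

Import Order.TTheory GRing.Theory Num.Theory.
Local Open Scope ring_scope.

(* Vectors are functions X -> R[i]; an "operator" is a function               *)
(* (X -> R[i]) -> (X -> R[i]) considered only through its values on l^2.     *)

Section L2.
Variables (R : realType) (X : choiceType).
Local Notation C := (R[i]).

Definition abs2 (z : C) : R := (complex.Re z) ^+ 2 + (complex.Im z) ^+ 2.

Definition sqnorm (f : X -> C) : \bar R :=
  \esum_(x in [set: X]) (abs2 (f x))%:E.

Definition l2 (f : X -> C) : Prop := (sqnorm f < +oo)%E.

Definition bounded_op (A : (X -> C) -> (X -> C)) : Prop :=
  [/\ forall f, l2 f -> l2 (A f),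
      forall (a : C) f g, l2 f -> l2 g ->
        A (fun x => a * f x + g x) = (fun x => a * A f x + A g x)
    & exists M : R, forall f, l2 f -> (sqnorm (A f) <= M%:E * sqnorm f)%E].

Definition op_eq (A B : (X -> C) -> (X -> C)) : Prop :=
  forall f, l2 f -> A f = B f.

Definition op_comp (A B : (X -> C) -> (X -> C)) := fun f => A (B f).
Definition op_add (A B : (X -> C) -> (X -> C)) := fun f x => A f x + B f x.
Definition op_id : (X -> C) -> (X -> C) := fun f => f.

Definition op_invertible (U : (X -> C) -> (X -> C)) : Prop :=
  bounded_op U /\ exists W, bounded_op W /\
    op_eq (op_comp W U) op_id /\ op_eq (op_comp U W) op_id.

Definition op_idempotent (P : (X -> C) -> (X -> C)) : Prop :=
  bounded_op P /\ op_eq (op_comp P P) P.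

Definition strongly_clean (T : (X -> C) -> (X -> C)) : Prop :=
  exists U P, op_invertible U /\ op_idempotent P /\
    op_eq (op_comp P T) (op_comp T P) /\ op_eq T (op_add U P).

End L2.

(* H = (+)_{n>=1} C^n is l^2(hidx) with hidx = {m : nat & 'I_m.+1}:         *)
(* the pair (m, i) is the basis vector e_{m+1, i+1} of C^{m+1}.              *)
(* K (a nonzero Hilbert space) is l^2(J) for a nonempty index set J (the     *)
(* index set of an orthonormal basis), and K (x) H = l^2(J * hidx) with      *)
(* e_j (x) e_{n,i} the basis vector indexed by (j, (n-1, i-1)).              *)

Definition hidx : Type := {m : nat & 'I_m.+1}.
HB.instance Definition _ := Choice.on hidx.

(* I (x) V on K (x) H, where V = (+)_n V_n, V_n e_{n,i} = e_{n,i-1},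
   e_{n,0} = 0.  In coordinates: (V f)_{n,i} = f_{n,i+1} (0 if i = n). *)
Definition IxV (R : realType) (J : choiceType)
    (f : (J * hidx)%type -> R[i]) : (J * hidx)%type -> R[i] :=
  fun p => let: (j, existT m k) := p in
    if (k.+1 < m.+1)%N then f (j, existT (fun m => 'I_m.+1) m (inord k.+1))
    else 0.

From HB Require Import structures.
From mathcomp Require Import all_boot all_order all_algebra.
From mathcomp Require Import complex.
From mathcomp Require Import boolp classical_sets reals constructive_ereal ereal esum.
From mathcomp Require Import functions zify.

(* In a strongly clean decomposition I (x) V = U + P with P commuting with
   I (x) V, the unit U satisfies U (P h) = U h as soon as P fixes (I (x) V) h,
   so P fixes h.  Since V kills e_(n,1) and maps e_(n,i+1) to e_(n,i), P fixes
   every basis vector of every block C^n, hence U acts on C^n as V_n - 1.  Its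
   inverse there is -(1 + V_n + ... + V_n^(n-1)), which maps e_(n,n) to
   -(e_(n,1) + ... + e_(n,n)), a vector of norm sqrt n: U^-1 is unbounded. *)

Set Implicit Arguments.
Unset Strict Implicit.
Unset Printing Implicit Defensive.
Import Order.TTheory GRing.Theory Num.Theory.
Local Open Scope ring_scope.

Section L2Operators.
Variables (R : realType) (X : choiceType).
Local Notation C := (R[i]).
Local Notation op := ((X -> C) -> (X -> C)).

Lemma abs2_ge0 (z : C) : 0 <= abs2 z.
Proof. by rewrite /abs2 addr_ge0 // sqr_ge0. Qed.

Lemma abs2N (z : C) : abs2 (- z) = abs2 z.
Proof. by case: z => a b; rewrite /abs2 /= !sqrrN. Qed.

Lemma abs2_0 : abs2 (0 : C) = 0.
Proof. by rewrite /abs2 /= expr0n addr0. Qed.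

Lemma abs2_1 : abs2 (1 : C) = 1.
Proof. by rewrite /abs2 /= expr0n expr1n addr0. Qed.

Lemma sqnorm0 : sqnorm (0 : X -> C) = 0%E.
Proof. by rewrite /sqnorm esum1 // => x _; rewrite abs2_0. Qed.

Lemma l2_0 : l2 (0 : X -> C).
Proof. by rewrite /l2 sqnorm0 ltry. Qed.

Lemma sqnormN (f : X -> C) : sqnorm (- f) = sqnorm f.
Proof. by apply: eq_esum => x _; rewrite opprfctE abs2N. Qed.

Lemma sqnormD_disjoint (f g : X -> C) :
  (forall x, f x = 0 \/ g x = 0) -> sqnorm (f + g) = (sqnorm f + sqnorm g)%E.
Proof.
move=> fg0; rewrite /sqnorm -esumD => [|x _|x _]; last 2 first.
- by rewrite lee_fin abs2_ge0.
- by rewrite lee_fin abs2_ge0.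
apply: eq_esum => x _; rewrite addrfctE -EFinD.
by case: (fg0 x) => ->; rewrite abs2_0 ?add0r ?addr0.
Qed.

Definition delta (p : X) : X -> C := fun x => (x == p)%:R.

Lemma sqnorm_delta p : sqnorm (delta p) = 1%E.
Proof.
pose ind1 x : \bar R := if x \in [set p]%classic then 1%E else 0%E.
rewrite /sqnorm (eq_esum (b := ind1)); first by rewrite -esum_mkcond esum_set1.
by move=> x _; rewrite /ind1 /delta in_set1; case: eqP; rewrite ?abs2_1 ?abs2_0.
Qed.

Lemma l2_delta p : l2 (delta p).
Proof. by rewrite /l2 sqnorm_delta ltry. Qed.

Lemma bounded_op0 (A : op) : bounded_op A -> A 0 = 0.
Proof.
case=> _ linA _; have := linA (-1) 0 0 l2_0 l2_0.
have -> : (fun x => -1 * (0 : X -> C) x + 0 x) = 0.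
  by apply/funext => x; rewrite mulr0 addr0.
by move/funeqP => A0; apply/funext => x; rewrite A0 mulN1r addNr.
Qed.

Lemma bounded_opND (A : op) f g : bounded_op A -> l2 f -> l2 g ->
  A (- f + g) = - A f + A g.
Proof.
case=> _ linA _ f2 g2; have := linA (-1) f g f2 g2.
have -> : (fun x => -1 * f x + g x) = - f + g.
  by apply/funext => x; rewrite mulN1r.
by move->; apply/funext => x; rewrite mulN1r.
Qed.

Lemma bounded_opN (A : op) f : bounded_op A -> l2 f -> A (- f) = - A f.
Proof.
move=> bA f2; have := bounded_opND bA f2 l2_0.
by rewrite (bounded_op0 bA) !addr0.
Qed.

Section CleanDecomposition.
Variables (T U P W : op).
Hypotheses (P2 : op_idempotent P) (PT : op_eq (op_comp P T) (op_comp T P)).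
Hypotheses (TUP : op_eq T (op_add U P)) (WU : op_eq (op_comp W U) (@op_id R X)).

Lemma clean_unit_fixed h : l2 h -> P h = h -> U h = T h - h.
Proof. by move=> h2 Ph; rewrite TUP // /op_add Ph addrK. Qed.

Lemma clean_fixed_of_image h : l2 h -> P (T h) = T h -> P h = h.
Proof.
move=> h2 PTh; have [[l2P _ _] PP] := P2.
have Ph2 := l2P h h2.
have TPh : T (P h) = T h by rewrite -[LHS]PT.
have UPh : U (P h) = U h.
  have Th : T h = U h + P h := TUP h2.
  by rewrite (clean_unit_fixed Ph2) ?TPh ?Th ?addrK //; apply: PP.
by rewrite -[LHS]WU // -[RHS]WU // /op_comp UPh.
Qed.

End CleanDecomposition.

End L2Operators.

Section ShiftBlock.
Variables (R : realType) (J : choiceType) (j0 : J) (n : nat).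
Local Notation C := (R[i]).
Local Notation X := (J * hidx)%type.
Local Notation op := ((X -> C) -> (X -> C)).
Local Notation T := (@IxV R J).

Definition block_pt (k : nat) : X :=
  (j0, Tagged (fun m => 'I_m.+1) (inord k : 'I_n.+1)).

Local Notation e k := (@delta R X (block_pt k)).

Lemma eq_block_pt j m (i : 'I_m.+1) k : (k <= n)%N ->
  ((j, existT (fun m => 'I_m.+1) m i) == block_pt k) =
  [&& j == j0, m == n & i == k :> nat].
Proof.
move=> kn; rewrite /block_pt xpair_eqE; congr andb.
have [mn|mn] := eqVneq m n; last first.
  by apply: contraNF mn => /eq_tag /eqP.
by move: i; rewrite mn => i; rewrite eq_Tagged -val_eqE /= inordK.
Qed.

Lemma eq_block_pts k l : (k <= n)%N -> (l <= n)%N ->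
  (block_pt k == block_pt l) = (k == l).
Proof. by move=> kn ln; rewrite {1}/block_pt eq_block_pt // !eqxx inordK. Qed.

Lemma IxV_block_pt0 : T (e 0) = 0.
Proof.
apply/funext => -[j [m i]]; rewrite /IxV /delta.
by case: ifPn => // im; rewrite eq_block_pt // inordK // eqn0Ngt ltn0Sn !andbF.
Qed.

Lemma IxV_block_ptS k : (k < n)%N -> T (e k.+1) = e k.
Proof.
move=> kn; apply/funext => -[j [m i]]; rewrite /IxV /delta.
case: ifPn => [im|].
  by rewrite (eq_block_pt _ _ kn) (eq_block_pt _ _ (ltnW kn)) inordK // eqSS.
rewrite (eq_block_pt _ _ (ltnW kn)) => im.
have -> : i = m :> nat by have := ltn_ord i; lia.
by case: (m =P n) => [->|_]; rewrite ?(gtn_eqF kn) ?andbF ?andFb.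
Qed.

Definition block_prefix k : X -> C := \sum_(i < k.+1) e i.

Lemma block_prefixS k : block_prefix k.+1 = block_prefix k + e k.+1.
Proof. exact: big_ord_recr. Qed.

Lemma sqnorm_block_prefix k :
  (k <= n)%N -> sqnorm (block_prefix k) = (k.+1%:R)%:E.
Proof.
elim: k => [|k IH] kn; first by rewrite /block_prefix big_ord1 sqnorm_delta.
rewrite block_prefixS sqnormD_disjoint ?IH ?sqnorm_delta 1?ltnW //.
  by rewrite -EFinD natr1.
move=> x; have [->|xk] := eqVneq x (block_pt k.+1); [left|right]; last first.
  by rewrite /delta (negbTE xk).
rewrite /block_prefix fct_sumE big1 // => i _.
by rewrite /delta eq_block_pts ?gtn_eqF // (leq_trans _ kn) // ltnW.
Qed.

Lemma idempotent_fixes_block (P : op) : bounded_op P ->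
    (forall h, l2 h -> P (T h) = T h -> P h = h) ->
  forall k, (k <= n)%N -> P (e k) = e k.
Proof.
move=> bP fixP; elim=> [|k IH] kn; apply: fixP (l2_delta R _) _.
  by rewrite IxV_block_pt0 bounded_op0.
by rewrite IxV_block_ptS // IH // ltnW.
Qed.

Lemma left_inverse_block (U W : op) :
    bounded_op W -> op_eq (op_comp W U) (@op_id R X) ->
    (forall k, (k <= n)%N -> U (e k) = T (e k) - e k) ->
  forall k, (k <= n)%N -> W (e k) = - block_prefix k.
Proof.
move=> bW WU Ue; elim=> [|k IH] kn.
  have := WU _ (l2_delta R (block_pt 0)).
  rewrite /op_comp /op_id Ue // IxV_block_pt0 add0r.
  rewrite (bounded_opN bW (l2_delta R _)).
  by move/(congr1 -%R); rewrite opprK /block_prefix big_ord1 => ->.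
have := WU _ (l2_delta R (block_pt k.+1)).
rewrite /op_comp /op_id Ue // IxV_block_ptS // addrC.
rewrite (bounded_opND bW (l2_delta R _) (l2_delta R _)).
rewrite (IH (ltnW kn)) block_prefixS => We.
by rewrite -[in RHS]We !opprD !opprK addrCA addNr addr0.
Qed.

End ShiftBlock.

Theorem lemma2p2 (R : realType) (J : choiceType) (j0 : J) :
  ~ strongly_clean (@IxV R J).
Proof.
move=> [U [P [[_ [W [bW [WU _]]]] [P2 [PT TUP]]]]].
have [_ _ [M boundW]] := bW.
set n := Num.truncn M.
have fixP := clean_fixed_of_image P2 PT TUP WU.
have Pe := idempotent_fixes_block j0 (n := n) P2.1 fixP.
have Ue k (kn : (k <= n)%N) := clean_unit_fixed TUP (l2_delta R _) (Pe k kn).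
have We := left_inverse_block (j0 := j0) (n := n) bW WU Ue.
have := boundW _ (l2_delta R (block_pt j0 n n)).
rewrite We // sqnormN sqnorm_block_prefix // sqnorm_delta mule1 lee_fin.
by rewrite leNgt truncnS_gt.
Qed.
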